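(* Let $H$ be a connected hypergraph, let $u_1,u_2$ be two distinct vertices of $H$, and let $G_{r_1},G_{r_2}$ be connected rooted hypergraphs with roots $r_1,r_2$, each having at least one edge, vertex-disjoint from $H$ and from each other. Let $H_1$ be obtained from $H$ by identifying both $r_1$ and $r_2$ with $u_1$, and $H_2$ be obtained from $H$ by identifying $r_1$ with $u_1$ and $r_2$ with $u_2$. Then $\rho(H_2)>\rho(H_1)$ if one of the following holds: (1) $d_H(u_1)=d_H(u_2)=d_H(u_1,u_2)=1$; (2) $\sigma_{H_1}(V'(G_{r_1}))+x_{u_1}\ge \sigma_{H_1}(V(H))$, where $\mathbf{x}=\mathbf{x}(H_1)$.
   Context: For a connected hypergraph $G$, $d_G(u,v)$ is the length of a shortest path between $u$ and $v$ (a path being a sequence $(v_0,e_1,v_1,\dots,e_p,v_p)$ with $v_{i-1},v_i\in e_i$, $v_{i-1}\ne v_i$, all $v_i,e_i$ distinct, of length $p$), $d_G(v)$ is the number of edges containing $v$, $D(G)=(d_G(u,v))$ is the distance matrix and $\rho(G)$ is its largest eigenvalue. The distance Perron vector $\mathbf{x}(G)$ is the unique positive unit eigenvector of $D(G)$ for $\rho(G)$, and $x_v$ is its entry at $v$. For $X\subseteq V(G)$, $\sigma_G(X)$ is the sum of the entries of $\mathbf{x}(G)$ over $X$. $V'(G_{r_1})$ denotes the set of vertices of the copy of $G_{r_1}$ in $H_1$ other than its root (identified with $u_1$); $V(H)$ is regarded as a subset of $V(H_1)$. *)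

From HB Require Import structures.
From mathcomp Require Import all_boot all_order all_algebra.
From mathcomp Require Import boolp reals.
Set Implicit Arguments. Unset Strict Implicit. Unset Printing Implicit Defensive.
Import Order.TTheory GRing.Theory Num.Theory.
Local Open Scope ring_scope.

Section Hypergraphs.
Variable T : finType.

Definition hypergraph (E : {set {set T}}) : Prop :=
  forall e, e \in E -> (2 <= #|e|)%N.

Definition hdeg (E : {set {set T}}) (v : T) : nat := #|[set e in E | v \in e]|.

(* A path (v_0,e_1,v_1,...,e_p,v_p) from u to v, encoded as the vertex list
   vs = [v_0;...;v_p] and the edge list es = [e_1;...;e_p]:
   v_{i-1}, v_i in e_i, v_{i-1} <> v_i, all v_i distinct, all e_i distinct,
   all e_i edges. *)
Definition is_path (E : {set {set T}}) (u v : T) (vs : seq T) (es : seq {set T})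
  : bool :=
  [&& size vs == (size es).+1, uniq vs, uniq es, all (fun e => e \in E) es,
      head u vs == u, last u vs == v &
      all (fun i => [&& nth u vs i \in nth set0 es i,
                        nth u vs i.+1 \in nth set0 es i &
                        nth u vs i != nth u vs i.+1]) (iota 0 (size es))].

Definition has_path_of_length (E : {set {set T}}) (u v : T) (p : nat) : bool :=
  `[< exists vs es, is_path E u v vs es /\ size es = p >].

Definition hconnected (E : {set {set T}}) : Prop :=
  forall u v : T, exists p, has_path_of_length E u v p.

(* d_G(u,v): length of a shortest path (0 by convention if there is none,
   which never happens for connected hypergraphs). *)
Definition hdist (E : {set {set T}}) (u v : T) : nat :=
  match pselect (exists p, has_path_of_length E u v p) with
  | left h => ex_minn h
  | right _ => 0%N
  end.

Definition dist_mx (R : pzRingType) (E : {set {set T}}) : 'M[R]_#|T| :=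
  \matrix_(i, j) (hdist E (enum_val i) (enum_val j))%:R.

End Hypergraphs.

Section Spectral.
Variable R : realType.

Definition largest_eigenvalue n (A : 'M[R]_n) (rho : R) : Prop :=
  eigenvalue A rho /\ forall a, eigenvalue A a -> a <= rho.

Definition perron_vector n (A : 'M[R]_n) (x : 'cV[R]_n) : Prop :=
  exists rho, [/\ largest_eigenvalue A rho, forall i, 0 < x i 0,
                  \sum_i x i 0 ^+ 2 = 1 & A *m x = rho *: x].

Definition ventry (W : finType) (x : 'cV[R]_#|W|) (w : W) : R := x (enum_rank w) 0.

Definition sigma (W : finType) (x : 'cV[R]_#|W|) (X : {set W}) : R :=
  \sum_(w in X) ventry x w.
End Spectral.

Section Coalescence.
Variables (T T1 T2 : finType) (r1 : T1) (r2 : T2).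

(* vertex set of the coalescences: V(H) + (V(G_{r1}) - r1) + (V(G_{r2}) - r2) *)
Definition cvert : finType :=
  (T + {x : T1 | x != r1} + {x : T2 | x != r2})%type.

Definition embH (x : T) : cvert := inl (inl x).
Definition emb1 (u : T) (x : T1) : cvert :=
  match @insub T1 (fun y => y != r1) _ x with
  | Some y => inl (inr y) | None => inl (inl u) end.
Definition emb2 (u : T) (x : T2) : cvert :=
  match @insub T2 (fun y => y != r2) _ x with
  | Some y => inr y | None => inl (inl u) end.

(* H with r1 identified with a and r2 identified with b *)
Definition coal_edges (EH : {set {set T}}) (E1 : {set {set T1}})
    (E2 : {set {set T2}}) (a b : T) : {set {set cvert}} :=
  [set (embH @: e) | e : {set T} in EH] :|: [set (emb1 a @: e) | e : {set T1} in E1]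
    :|: [set (emb2 b @: e) | e : {set T2} in E2].

Definition V'G1 : {set cvert} := [set inl (inr y) | y : {x : T1 | x != r1}].
Definition VH : {set cvert} := [set embH x | x : T].
End Coalescence.

(* Let x be the Perron vector of D(H_1); in case (1) it is obtained from any
   eigenvector for rho(H_1) by taking absolute values, since equality then
   holds in the Rayleigh principle.  Moving G_{r_2} from u_1 to u_2 only
   changes the distances between V'(G_{r_2}) and the rest, and as u_1, u_2 are
   cut vertices one finds
     x^T D(H_2) x - x^T D(H_1) x = 2 sigma(V'(G_{r_2})) * g,
     g = sum_{v in V(H)} (d(v,u_2) - d(v,u_1)) x_v + d(u_1,u_2) sigma(V'(G_{r_1})),
   so rho(H_2) >= x^T D(H_2) x > rho(H_1) as soon as g > 0.  Under (2) the
   triangle inequality d(v,u_1) <= d(v,u_2) + d(u_1,u_2) gives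
   g >= d(u_1,u_2) x_{u_1} > 0.  Under (1) u_1 and u_2 are pendant twins, so
   g = x_{u_1} - x_{u_2} + sigma(V'(G_{r_1})); subtracting the eigenequations
   at u_1 and u_2 gives (rho + 1)(x_{u_1} - x_{u_2}) = -sigma(V'(G_{r_1}))
   - sigma(V'(G_{r_2})), while rho sigma(V'(G_{r_1})) >= 2 sigma(V'(G_{r_2}))
   because the two branches are at distance at least 2; hence
   (rho + 1) g >= sigma(V'(G_{r_2})) > 0. *)

From HB Require Import structures.
From mathcomp Require Import all_boot all_order all_algebra.
From mathcomp Require Import boolp reals.
From mathcomp Require Import sesquilinear spectral complex.
From mathcomp Require Import ring lra zify.
Set Implicit Arguments. Unset Strict Implicit. Unset Printing Implicit Defensive.
Import Order.TTheory GRing.Theory Num.Theory Num.Def.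

Section Walks.
Variables (V : finType) (E : {set {set V}}).

Definition hadj (u v : V) : bool :=
  (u == v) || [exists e in E, (u \in e) && (v \in e)].

(* Since [hadj] is reflexive, [hreach n u v] means that some walk of length at
   most [n] joins [u] to [v]. *)
Fixpoint hreach (n : nat) (u v : V) : bool :=
  if n is n'.+1 then [exists w, hadj u w && hreach n' w v] else u == v.

Definition hconn : Prop := forall u v, exists n, hreach n u v.

Lemma hadj_refl u : hadj u u.
Proof. by rewrite /hadj eqxx. Qed.

Lemma hadj_edge e u v : e \in E -> u \in e -> v \in e -> hadj u v.
Proof. by move=> he hu hv; apply/orP; right; apply/existsP; exists e; rewrite he hu hv. Qed.

Lemma hadjP u v :
  hadj u v -> u = v \/ exists e, [/\ e \in E, u \in e & v \in e].
Proof.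
by case/orP => [/eqP ->|/existsP [e /and3P [he hu hv]]]; [left | right; exists e].
Qed.

Lemma hadj_sym u v : hadj u v -> hadj v u.
Proof. by case/hadjP => [->|[e [he hu hv]]]; [exact: hadj_refl | exact: hadj_edge hv hu]. Qed.

Lemma hreach1 u v : hadj u v -> hreach 1 u v.
Proof. by move=> huv; apply/existsP; exists v; rewrite huv /= eqxx. Qed.

Lemma hreach_add m n u w v : hreach m u w -> hreach n w v -> hreach (m + n) u v.
Proof.
elim: m u => [|m IH] u /=; first by move=> /eqP->.
move=> /existsP [w' /andP [huw' hw']] hwv; apply/existsP; exists w'.
by rewrite huw' (IH _ hw' hwv).
Qed.

Lemma hreach_sym n u v : hreach n u v -> hreach n v u.
Proof.
elim: n u => [|n IH] u /=; first by rewrite eq_sym.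
move=> /existsP [w /andP [huw hwv]].
by have := hreach_add (IH _ hwv) (hreach1 (hadj_sym huw)); rewrite addn1.
Qed.

Lemma hreach_cut (A : pred V) c :
  (forall p q, A p -> ~~ A q -> hadj p q -> q = c) ->
  forall n p q, A p -> ~~ A q -> hreach n p q ->
  exists m k, [/\ m + k = n, hreach m p c & hreach k c q].
Proof.
move=> hcut; elim=> [|n IH] p q hp hq /=.
  by move=> /eqP e; subst q; rewrite hp in hq.
move=> /existsP [w /andP [hpw hwq]].
case: (boolP (A w)) => hw.
  have [m [k [<- hm hk]]] := IH _ _ hw hq hwq.
  by exists m.+1, k; split => //; apply/existsP; exists w; rewrite hpw.
by rewrite -(hcut _ _ hp hw hpw); exists 1, n; split => //; exact: hreach1.
Qed.

Lemma is_pathP u v vs es :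
  reflect [/\ size vs = (size es).+1, uniq vs, uniq es, all (mem E) es &
      [/\ head u vs = u, last u vs = v &
      forall i, i < size es -> [/\ nth u vs i \in nth set0 es i,
                        nth u vs i.+1 \in nth set0 es i &
                        nth u vs i != nth u vs i.+1]]]
    (is_path E u v vs es).
Proof.
apply: (iffP idP).
  case/and5P => /eqP hs hvs hes hE /and3P [/eqP hh /eqP hl /allP hi].
  split => //; split => // i lti; have := hi i; rewrite mem_iota add0n lti.
  by move=> /(_ isT) /and3P.
case=> hs hvs hes hE [hh hl hi]; rewrite /is_path hs hvs hes hE hh hl !eqxx /=.
by apply/allP => i; rewrite mem_iota add0n => /hi [-> -> ->].
Qed.

Lemma is_path_hreach u v vs es : is_path E u v vs es ->
  forall j t, j + t <= size es -> hreach t (nth u vs j) (nth u vs (j + t)).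
Proof.
move=> /is_pathP [_ _ _ hE [_ _ hi]] j; elim=> [|t IH] hjt; first by rewrite addn0 /=.
have lt_jt : j + t < size es by rewrite -addnS.
rewrite -addn1 addnA; apply: hreach_add (IH (ltnW lt_jt)) (hreach1 _).
have [h1 h2 _] := hi _ lt_jt; rewrite addn1.
exact: hadj_edge (allP hE _ (mem_nth _ lt_jt)) h1 h2.
Qed.

Lemma is_path_cons u w v e vs es :
  is_path E w v (w :: vs) es -> e \in E -> u \in e -> w \in e -> u != w ->
  u \notin w :: vs -> e \notin es -> is_path E u v (u :: w :: vs) (e :: es).
Proof.
move=> /is_pathP [[sz] hvs hes hE [_ hl hi]] he hu hw huw uvs ees.
apply/is_pathP; split; rewrite /= ?sz ?uvs ?hvs ?ees ?hes ?he //.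
split => // -[|i] lti //=.
have [h1 h2 h3] := hi _ lti.
have e1 : nth u (w :: vs) i = nth w (w :: vs) i by apply: set_nth_default; rewrite /= sz ltnW.
have e2 : nth u vs i = nth w vs i by apply: set_nth_default; rewrite sz.
by rewrite e1 e2.
Qed.

Lemma hreach_min_is_path n u v :
  hreach n u v -> (forall k, k < n -> ~~ hreach k u v) ->
  exists vs es, is_path E u v vs es /\ size es = n.
Proof.
elim: n u => [|n IH] u.
  by move=> /eqP <- _; exists [:: u], [::]; split => //; apply/is_pathP.
move=> /existsP [w /andP [huw hwv]] hmin.
have no_short k : k <= n -> ~~ hreach k u v by move=> lekn; apply: hmin.
have hminw k : k < n -> ~~ hreach k w v.
  by move=> ltkn; apply: contra (hmin k.+1 ltkn) => hwk; apply/existsP; exists w; rewrite huw.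
have [[|w0 vs] [es [hp hs]]] := IH _ hwv hminw; first by case/is_pathP: hp.
(* a repeated vertex or edge on [u :: w :: vs] would give a walk shorter than [n.+1] *)
have [[sz] _ _ _ [/= hw0 hl _]] := is_pathP _ _ _ _ hp.
subst w0; rewrite hs in sz.
have uw : u != w by apply: contraNneq (no_short _ (leqnn n)) => ->.
have [e [he hu hw]] : exists e, [/\ e \in E, u \in e & w \in e].
  by case/hadjP: huw => [/eqP|//]; rewrite (negbTE uw).
have tail_reach j : j <= n -> hreach (n - j) (nth w (w :: vs) j) v.
  move=> lejn; have := is_path_hreach hp (j := j) (t := n - j).
  by rewrite subnKC // hs -hl (last_nth w) sz => /(_ (leqnn _)).
exists (u :: w :: vs), (e :: es); split; last by rewrite /= hs.
apply: (is_path_cons hp he hu hw uw).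
  apply/negP => uvs; have := tail_reach (index u (w :: vs)); rewrite nth_index //.
  rewrite -ltnS -sz index_mem uvs => /(_ isT).
  by apply/negP/no_short; rewrite sz leq_subr.
apply/negP => ees; have lt_idx := ees; rewrite -index_mem hs in lt_idx.
set j := index e es in lt_idx.
case/is_pathP: (hp) => _ _ _ _ [_ _ /(_ j)]; rewrite hs => /(_ lt_idx) [_ hj _].
rewrite nth_index // in hj.
have := hreach_add (hreach1 (hadj_edge he hu hj)) (tail_reach _ lt_idx).
by rewrite add1n subnSK //; apply/negP/no_short; rewrite leq_subr.
Qed.

Lemma hadj_pendant u1 u2 w : hdeg E u1 = 1 -> u1 != u2 -> hadj u1 u2 ->
  hadj u1 w -> w != u1 -> hadj u2 w.
Proof.
move=> /eqP/cards1P [e1 E_u1] u12 /hadjP [/eqP|[e [he h1 h2]]]; first by rewrite (negbTE u12).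
case/hadjP => [->|[e' [he' h1' hw]]]; first by rewrite eqxx.
have edge_u1 f : f \in E -> u1 \in f -> f = e1.
  by move=> hf h1f; apply/set1P; rewrite -E_u1 inE hf h1f.
by move=> _; apply: (hadj_edge he h2); rewrite (edge_u1 _ he h1) -(edge_u1 _ he' h1').
Qed.

Lemma hreach_pendant u1 u2 n x : hdeg E u1 = 1 -> u1 != u2 -> hadj u1 u2 ->
  x != u1 -> hreach n u1 x -> hreach n u2 x.
Proof.
move=> deg1 u12 adj12; elim: n x => [|n IH] x xu1 /=; first by rewrite eq_sym (negbTE xu1).
move=> /existsP [w /andP [adj1w hwx]]; apply/existsP.
have [ew|wu1] := eqVneq w u1; first by exists u2; rewrite hadj_refl IH // -ew.
by exists w; rewrite (hadj_pendant deg1 u12 adj12 adj1w wu1).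
Qed.

Lemma has_path_hreach u v p : has_path_of_length E u v p -> hreach p u v.
Proof.
move=> /asboolP [vs [es [hp <-]]].
have := is_path_hreach hp (j := 0) (t := size es) (leqnn _).
by case/is_pathP: hp => sz _ _ _ [hh hl _]; rewrite add0n nth0 hh -hl -nth_last sz.
Qed.

Lemma hdist_spec u v : (exists n, hreach n u v) ->
  hreach (hdist E u v) u v /\ (forall k, hreach k u v -> hdist E u v <= k).
Proof.
move=> hex; have [m hm hmin] := ex_minnP hex.
have hpm : has_path_of_length E u v m.
  apply/asboolP; apply: hreach_min_is_path => // k ltkm.
  by apply: contraL ltkm => /hmin; rewrite leqNgt.
rewrite /hdist; case: pselect => [h|[]]; last by exists m.
have [d hd hdmin] := ex_minnP h; split; first exact: has_path_hreach.
by move=> k /hmin; apply: leq_trans (hdmin _ hpm).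
Qed.

Lemma hconnected_hconn : hconnected E -> hconn.
Proof. by move=> h u v; have [p hp] := h u v; exists p; exact: has_path_hreach. Qed.

Hypothesis connE : hconn.

Lemma hreach_hdist u v : hreach (hdist E u v) u v.
Proof. by case: (hdist_spec (connE u v)). Qed.

Lemma hdist_le u v k : hreach k u v -> hdist E u v <= k.
Proof. by case: (hdist_spec (connE u v)) => _; apply. Qed.

Lemma hdistC u v : hdist E u v = hdist E v u.
Proof. by apply/eqP; rewrite eqn_leq !hdist_le // hreach_sym // hreach_hdist. Qed.

Lemma hdist_triangle u w v : hdist E u v <= hdist E u w + hdist E w v.
Proof. exact/hdist_le/hreach_add/hreach_hdist/hreach_hdist. Qed.

Lemma hdist_eq0 u v : (hdist E u v == 0) = (u == v).
Proof.
apply/eqP/eqP => [h|->]; first by have := hreach_hdist u v; rewrite h => /eqP.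
by apply/eqP; rewrite -leqn0 hdist_le //= eqxx.
Qed.

Lemma hdistxx u : hdist E u u = 0.
Proof. by apply/eqP; rewrite hdist_eq0. Qed.

Lemma hdist_cut (A : pred V) c :
  (forall p q, A p -> ~~ A q -> hadj p q -> q = c) ->
  forall p q, A p -> ~~ A q -> hdist E p q = hdist E p c + hdist E c q.
Proof.
move=> hcut p q hp hq; apply/eqP; rewrite eqn_leq hdist_triangle /=.
have [m [k [<- hm hk]]] := hreach_cut hcut hp hq (hreach_hdist p q).
by rewrite leq_add // hdist_le.
Qed.

Lemma hdist_pendant_le u1 u2 x : hdeg E u1 = 1 -> hdist E u1 u2 = 1 ->
  x != u1 -> hdist E u2 x <= hdist E u1 x.
Proof.
move=> deg1 d12 xu1; have u12 : u1 != u2 by rewrite -hdist_eq0 d12.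
have /existsP [w /andP [adj12 /eqP ew]] : hreach 1 u1 u2 by rewrite -d12 hreach_hdist.
subst w; exact/hdist_le/(hreach_pendant deg1 u12 adj12 xu1)/hreach_hdist.
Qed.

Lemma pendant_twins_hdist u1 u2 v : hdeg E u1 = 1 -> hdeg E u2 = 1 ->
  hdist E u1 u2 = 1 -> v != u1 -> v != u2 -> hdist E v u1 = hdist E v u2.
Proof.
move=> deg1 deg2 d12 vu1 vu2; have d21 : hdist E u2 u1 = 1 by rewrite hdistC.
by apply/eqP; rewrite eqn_leq !(hdistC v) !hdist_pendant_le.
Qed.

End Walks.

Lemma hreach_map (V W : finType) (E : {set {set V}}) (F : {set {set W}}) (f : V -> W) :
  (forall u v, hadj E u v -> hadj F (f u) (f v)) ->
  forall n u v, hreach E n u v -> hreach F n (f u) (f v).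
Proof.
move=> hf; elim=> [|n IH] u v /=; first by move=> /eqP->.
by move=> /existsP [w /andP [huw hwv]]; apply/existsP; exists (f w); rewrite hf // IH.
Qed.

Lemma hdist_map (V W : finType) (E : {set {set V}}) (F : {set {set W}}) (f : V -> W) :
  hconn E -> hconn F -> (forall u v, hadj E u v -> hadj F (f u) (f v)) ->
  forall u v, hdist F (f u) (f v) <= hdist E u v.
Proof. by move=> cE cF hf u v; apply/(hdist_le cF)/(hreach_map hf)/hreach_hdist. Qed.

Lemma hypergraph_exists_neq (V : finType) (E : {set {set V}}) (r : V) :
  hypergraph E -> E != set0 -> exists y, y != r.
Proof.
move=> hypE /set0Pn [e he]; have /card_gt0P [y] : 0 < #|e :\ r|.
  by move: (hypE e he); rewrite (cardsD1 r e); case: (r \in e) => /=; lia.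
by rewrite !inE => /andP [yr _]; exists y.
Qed.

Section CoalescenceDistances.
Variables (T T1 T2 : finType) (r1 : T1) (r2 : T2).
Variables (EH : {set {set T}}) (E1 : {set {set T1}}) (E2 : {set {set T2}}).
Variables (a b : T).
Hypotheses (connH : hconn EH) (conn1 : hconn E1) (conn2 : hconn E2).

Local Notation V := (@cvert T T1 T2 r1 r2).
Local Notation K := (@coal_edges T T1 T2 r1 r2 EH E1 E2 a b).
Local Notation embH := (@embH T T1 T2 r1 r2).
Local Notation emb1 := (@emb1 T T1 T2 r1 r2 a).
Local Notation emb2 := (@emb2 T T1 T2 r1 r2 b).

Definition retH (p : V) : T :=
  match p with inl (inl x) => x | inl (inr _) => a | inr _ => b end.
Definition ret1 (p : V) : T1 := if p is inl (inr y) then val y else r1.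
Definition ret2 (p : V) : T2 := if p is inr y then val y else r2.

Lemma emb1_val (y : {x : T1 | x != r1}) : emb1 (val y) = inl (inr y).
Proof. by rewrite /emb1 valK. Qed.

Lemma emb2_val (y : {x : T2 | x != r2}) : emb2 (val y) = inr y.
Proof. by rewrite /emb2 valK. Qed.

Lemma emb1_root : emb1 r1 = embH a.
Proof. by rewrite /emb1 insubF // eqxx. Qed.

Lemma emb2_root : emb2 r2 = embH b.
Proof. by rewrite /emb2 insubF // eqxx. Qed.

Lemma emb1P z : emb1 z = embH a \/ exists y, emb1 z = inl (inr y).
Proof. by rewrite /emb1; case: insubP => [y _ _|_]; [right; exists y | left]. Qed.

Lemma emb2P z : emb2 z = embH b \/ exists y, emb2 z = inr y.
Proof. by rewrite /emb2; case: insubP => [y _ _|_]; [right; exists y | left]. Qed.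

Lemma retH_emb1 z : retH (emb1 z) = a. Proof. by case: (emb1P z) => [->|[y ->]]. Qed.
Lemma retH_emb2 z : retH (emb2 z) = b. Proof. by case: (emb2P z) => [->|[y ->]]. Qed.
Lemma ret1_emb1 z : ret1 (emb1 z) = z.
Proof. by rewrite /emb1; case: insubP => [y _ <-|/negbNE/eqP ->]. Qed.
Lemma ret1_emb2 z : ret1 (emb2 z) = r1. Proof. by case: (emb2P z) => [->|[y ->]]. Qed.
Lemma ret2_emb1 z : ret2 (emb1 z) = r2. Proof. by case: (emb1P z) => [->|[y ->]]. Qed.
Lemma ret2_emb2 z : ret2 (emb2 z) = z.
Proof. by rewrite /emb2; case: insubP => [y _ <-|/negbNE/eqP ->]. Qed.

Lemma coal_edgesP e' : e' \in K ->
  [\/ exists2 e, e \in EH & e' = embH @: e,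
      exists2 e, e \in E1 & e' = emb1 @: e |
      exists2 e, e \in E2 & e' = emb2 @: e].
Proof.
rewrite /coal_edges !inE => /orP [/orP [] | ] /imsetP [e he ->].
- by apply: Or31; exists e.
- by apply: Or32; exists e.
- by apply: Or33; exists e.
Qed.

Lemma hadj_embH x y : hadj EH x y -> hadj K (embH x) (embH y).
Proof.
case/hadjP => [->|[e [he hx hy]]]; first exact: hadj_refl.
by apply: (hadj_edge (e := embH @: e)); rewrite ?imset_f // !inE imset_f.
Qed.

Lemma hadj_emb1 x y : hadj E1 x y -> hadj K (emb1 x) (emb1 y).
Proof.
case/hadjP => [->|[e [he hx hy]]]; first exact: hadj_refl.
by apply: (hadj_edge (e := emb1 @: e)); rewrite ?imset_f // !inE imset_f ?orbT.
Qed.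

Lemma hadj_emb2 x y : hadj E2 x y -> hadj K (emb2 x) (emb2 y).
Proof.
case/hadjP => [->|[e [he hx hy]]]; first exact: hadj_refl.
by apply: (hadj_edge (e := emb2 @: e)); rewrite ?imset_f // !inE imset_f ?orbT.
Qed.

Lemma hadj_retH p q : hadj K p q -> hadj EH (retH p) (retH q).
Proof.
case/hadjP => [->|[e' [he hp hq]]]; first exact: hadj_refl.
case: (coal_edgesP he) => -[e he0 ee]; subst e';
  move: hp hq => /imsetP [x hx ->] /imsetP [y hy ->].
- exact: hadj_edge he0 hx hy.
- by rewrite !retH_emb1 hadj_refl.
- by rewrite !retH_emb2 hadj_refl.
Qed.

Lemma hadj_ret1 p q : hadj K p q -> hadj E1 (ret1 p) (ret1 q).
Proof.
case/hadjP => [->|[e' [he hp hq]]]; first exact: hadj_refl.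
case: (coal_edgesP he) => -[e he0 ee]; subst e';
  move: hp hq => /imsetP [x hx ->] /imsetP [y hy ->].
- exact: hadj_refl.
- by rewrite !ret1_emb1; exact: hadj_edge he0 hx hy.
- by rewrite !ret1_emb2 hadj_refl.
Qed.

Lemma hadj_ret2 p q : hadj K p q -> hadj E2 (ret2 p) (ret2 q).
Proof.
case/hadjP => [->|[e' [he hp hq]]]; first exact: hadj_refl.
case: (coal_edgesP he) => -[e he0 ee]; subst e';
  move: hp hq => /imsetP [x hx ->] /imsetP [y hy ->].
- exact: hadj_refl.
- by rewrite !ret2_emb1 hadj_refl.
- by rewrite !ret2_emb2; exact: hadj_edge he0 hx hy.
Qed.

Lemma coal_hreach_root p : exists n, hreach K n p (embH a).
Proof.
case: p => [[x|y]|y].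
- have [n hn] := connH x a; exists n; exact: hreach_map hadj_embH _ _ _ hn.
- have [n hn] := conn1 (val y) r1; exists n; rewrite -emb1_val -emb1_root.
  exact: hreach_map hadj_emb1 _ _ _ hn.
- have [n hn] := conn2 (val y) r2; have [m hm] := connH b a.
  exists (n + m); apply: (hreach_add (w := embH b)).
    by rewrite -emb2_val -emb2_root; exact: hreach_map hadj_emb2 _ _ _ hn.
  exact: hreach_map hadj_embH _ _ _ hm.
Qed.

Lemma coal_hconn : hconn K.
Proof.
move=> p q; have [n hn] := coal_hreach_root p; have [m hm] := coal_hreach_root q.
by exists (n + m); exact: hreach_add hn (hreach_sym hm).
Qed.

Local Notation dK := (hdist K).

Lemma coal_hdistC p q : dK p q = dK q p.
Proof. exact: hdistC coal_hconn p q. Qed.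

Lemma hdist_embH x y : dK (embH x) (embH y) = hdist EH x y.
Proof.
apply/eqP; rewrite eqn_leq (hdist_map connH coal_hconn hadj_embH) /=.
exact: (hdist_map coal_hconn connH hadj_retH (embH x) (embH y)).
Qed.

Lemma hdist_emb1 x y : dK (emb1 x) (emb1 y) = hdist E1 x y.
Proof.
apply/eqP; rewrite eqn_leq (hdist_map conn1 coal_hconn hadj_emb1) /=.
by have := hdist_map coal_hconn conn1 hadj_ret1 (emb1 x) (emb1 y); rewrite !ret1_emb1.
Qed.

Lemma hdist_emb2 x y : dK (emb2 x) (emb2 y) = hdist E2 x y.
Proof.
apply/eqP; rewrite eqn_leq (hdist_map conn2 coal_hconn hadj_emb2) /=.
by have := hdist_map coal_hconn conn2 hadj_ret2 (emb2 x) (emb2 y); rewrite !ret2_emb2.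
Qed.

Definition in_branch1 (p : V) : bool := if p is inl (inr _) then true else false.
Definition in_branch2 (p : V) : bool := if p is inr _ then true else false.

Lemma branch1_cut p q : in_branch1 p -> ~~ in_branch1 q -> hadj K p q -> q = embH a.
Proof.
move=> hp hq /hadjP [e|[e' [he hpe hqe]]]; first by subst q; rewrite hp in hq.
case: (coal_edgesP he) => -[e _ ee]; subst e'.
- by move: hpe hp => /imsetP [x _ ->].
- by move: hqe hq => /imsetP [x _ ->]; case: (emb1P x) => [//|[y ->]].
- by move: hpe hp => /imsetP [x _ ->]; case: (emb2P x) => [->|[y ->]].
Qed.

Lemma branch2_cut p q : in_branch2 p -> ~~ in_branch2 q -> hadj K p q -> q = embH b.
Proof.
move=> hp hq /hadjP [e|[e' [he hpe hqe]]]; first by subst q; rewrite hp in hq.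
case: (coal_edgesP he) => -[e _ ee]; subst e'.
- by move: hpe hp => /imsetP [x _ ->].
- by move: hpe hp => /imsetP [x _ ->]; case: (emb1P x) => [->|[y ->]].
- by move: hqe hq => /imsetP [x _ ->]; case: (emb2P x) => [//|[y ->]].
Qed.

Lemma coal_hdist_HH x y : dK (inl (inl x)) (inl (inl y)) = hdist EH x y.
Proof. exact: hdist_embH. Qed.

Lemma coal_hdist_11 (y y' : {x : T1 | x != r1}) :
  dK (inl (inr y)) (inl (inr y')) = hdist E1 (val y) (val y').
Proof. by rewrite -!emb1_val hdist_emb1. Qed.

Lemma coal_hdist_22 (y y' : {x : T2 | x != r2}) :
  dK (inr y) (inr y') = hdist E2 (val y) (val y').
Proof. by rewrite -!emb2_val hdist_emb2. Qed.

Lemma coal_hdist_H1 x (y : {x : T1 | x != r1}) :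
  dK (inl (inl x)) (inl (inr y)) = hdist EH x a + hdist E1 r1 (val y).
Proof.
rewrite coal_hdistC (hdist_cut coal_hconn branch1_cut) //.
rewrite -emb1_val -{1}emb1_root hdist_emb1 hdist_embH.
by rewrite addnC (hdistC conn1) (hdistC connH).
Qed.

Lemma coal_hdist_H2 x (y : {x : T2 | x != r2}) :
  dK (inl (inl x)) (inr y) = hdist EH x b + hdist E2 r2 (val y).
Proof.
rewrite coal_hdistC (hdist_cut coal_hconn branch2_cut) //.
rewrite -emb2_val -{1}emb2_root hdist_emb2 hdist_embH.
by rewrite addnC (hdistC conn2) (hdistC connH).
Qed.

Lemma coal_hdist_12 (y : {x : T1 | x != r1}) (y' : {x : T2 | x != r2}) :
  dK (inl (inr y)) (inr y') = hdist E1 r1 (val y) + hdist EH a b + hdist E2 r2 (val y').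
Proof.
rewrite coal_hdistC (hdist_cut coal_hconn branch2_cut) //.
rewrite -{1}emb2_val -{1}emb2_root hdist_emb2.
(* [embH b] is [inl (inl b)] only after unfolding, hence the cast *)
rewrite (coal_hdist_H1 b y : dK (embH b) _ = _).
by rewrite (hdistC conn2 (val y')) (hdistC connH b); lia.
Qed.

End CoalescenceDistances.

Local Open Scope ring_scope.

Lemma mulmx_quadE (R : comPzRingType) n (M : 'M[R]_n) (x y : 'cV[R]_n) :
  (x^T *m M *m y) 0 0 = \sum_i \sum_j x i 0 * M i j * y j 0.
Proof.
rewrite mxE exchange_big /=; apply: eq_bigr => j _.
by rewrite !mxE mulr_suml; apply: eq_bigr => i _; rewrite !mxE.
Qed.

Lemma mulmx_dotE (R : comPzRingType) n (x y : 'cV[R]_n) :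
  (x^T *m y) 0 0 = \sum_i x i 0 * y i 0.
Proof. by rewrite mxE; apply: eq_bigr => i _; rewrite !mxE. Qed.

Section PositiveSemidefinite.
Variables (R : realFieldType) (n : nat) (B : 'M[R]_n).
Hypotheses (symB : B^T = B) (psdB : forall x : 'cV[R]_n, 0 <= (x^T *m B *m x) 0 0).

Local Notation form x y := ((x^T *m B *m y) 0 0).

Lemma mxformDr (x y z : 'cV[R]_n) : form x (y + z) = form x y + form x z.
Proof. by rewrite mulmxDr mxE. Qed.

Lemma mxformZr (x : 'cV[R]_n) t (y : 'cV[R]_n) : form x (t *: y) = t * form x y.
Proof. by rewrite -scalemxAr mxE. Qed.

Lemma mxformC (x y : 'cV[R]_n) : form x y = form y x.
Proof.
rewrite -[in LHS](trmxK (x^T *m B *m y)) mxE.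
by rewrite !trmx_mul trmxK symB mulmxA.
Qed.

Lemma mxformDl (x y z : 'cV[R]_n) : form (x + y) z = form x z + form y z.
Proof. by rewrite [LHS]mxformC mxformDr !(mxformC z). Qed.

Lemma mxformZl (x : 'cV[R]_n) t (y : 'cV[R]_n) : form (t *: x) y = t * form x y.
Proof. by rewrite [LHS]mxformC mxformZr mxformC. Qed.

Lemma psd_mxform_eq0_ker (w : 'cV[R]_n) : form w w = 0 -> B *m w = 0.
Proof.
move=> hw.
have orth (y : 'cV[R]_n) : form y w = 0.
  set s := form y w; set c := form y y; have c_ge0 : 0 <= c := psdB y.
  have c1_gt0 : 0 < c + 1 by rewrite ltr_wpDl.
  (* positivity of the form at [w + t y], [t = - s / (c + 1)], forces [s = 0] *)
  have := psdB (w + (- s / (c + 1)) *: y).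
  rewrite mxformDl !mxformDr !mxformZl !mxformZr (mxformC w y) hw -/s -/c.
  have -> : 0 + - s / (c + 1) * s + (- s / (c + 1) * s + - s / (c + 1) * (- s / (c + 1) * c))
      = s ^+ 2 * (- c - 2) / (c + 1) ^+ 2 by field; exact: lt0r_neq0.
  rewrite pmulr_lge0 ?invr_gt0 ?exprn_gt0 // => h.
  by apply/eqP; rewrite -sqrf_eq0 eq_le sqr_ge0 andbT; nra.
apply/matrixP => i j; rewrite ord1 [RHS]mxE -(orth (delta_mx i 0)).
by rewrite trmx_delta -mulmxA -rowE [RHS]mxE.
Qed.

End PositiveSemidefinite.

Section Rayleigh.
Variables (R : rcfType) (n : nat) (A : 'M[R]_n) (rho : R).
Hypotheses (symA : A^T = A) (rho_max : forall a, eigenvalue A a -> a <= rho).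

Local Notation toC := (real_complex R).

Lemma real_complex_real (r : R) : toC r \is Num.real.
Proof.
by case: (lerP 0 r) => h; [apply/ger0_real | apply/ler0_real];
  rewrite -(rmorph0 toC) lecR // ltW.
Qed.

Lemma conj_real_complex (r : R) : (toC r)^* = toC r.
Proof. exact/CrealP/real_complex_real. Qed.

Let AC := map_mx toC A.
Let P := spectralmx AC.
Let d := spectral_diag AC.

Lemma hermitian_complexified : AC \is hermsymmx.
Proof.
apply/is_hermitianmxP; rewrite expr0 scale1r; apply/matrixP => i j.
by rewrite !mxE conj_real_complex -[in RHS]symA mxE.
Qed.

Lemma spectral_decomposition : AC = invmx P *m diag_mx d *m P.
Proof. exact/orthomx_spectralP/hermitian_normalmx/hermitian_complexified. Qed.

Lemma spectral_diag_eigenvalue i : eigenvalue AC (d 0 i).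
Proof.
apply/eigenvalueP; exists (row i P).
  have PAC : P *m AC = diag_mx d *m P.
    rewrite spectral_decomposition !mulmxA mulmxV ?mul1mx //.
    exact/unitarymx_unit/(spectral_unitarymx AC).
  by rewrite -row_mul PAC mul_diag_mx; apply/rowP => j; rewrite !mxE.
apply/eqP => h0; have := congr1 (row i) (unitarymxP (spectral_unitarymx AC)).
rewrite row_mul h0 mul0mx => /rowP /(_ i) /eqP.
by rewrite !mxE eqxx eq_sym oner_eq0.
Qed.

Lemma spectral_diag_le i : d 0 i <= toC rho.
Proof.
have /mxOverP/(_ 0 i)/Creal_ReP := hermitian_spectral_diag_real hermitian_complexified.
move=> dr; rewrite -dr -complexRe lecR; apply: rho_max.
have := spectral_diag_eigenvalue i; rewrite -dr -complexRe !eigenvalue_root_char.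
by rewrite -map_char_poly fmorph_root.
Qed.

Lemma rayleigh_le (x : 'cV[R]_n) : (x^T *m A *m x) 0 0 <= rho * (x^T *m x) 0 0.
Proof.
rewrite -lecR; set xC := map_mx toC x; set y := P *m xC.
have PtP : map_mx conjC P^T *m P = 1%:M.
  rewrite -invmx_unitary ?(spectral_unitarymx AC) // mulVmx //.
  exact/unitarymx_unit/(spectral_unitarymx AC).
have conj_y : xC^T *m map_mx conjC P^T = map_mx conjC y^T.
  have xC_real : map_mx conjC xC^T = xC^T.
    by apply/matrixP => i j; rewrite !mxE conj_real_complex.
  by rewrite /y trmx_mul map_mxM xC_real.
have toC_entry (M : 'M[R]_1) : toC (M 0 0) = map_mx toC M 0 0 by rewrite mxE.
have quadA : toC ((x^T *m A *m x) 0 0) = (map_mx conjC y^T *m diag_mx d *m y) 0 0.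
  rewrite toC_entry map_mxM map_mxM -map_trmx -/xC -/AC.
  by rewrite spectral_decomposition invmx_unitary ?(spectral_unitarymx AC) // -conj_y !mulmxA.
have quad1 : toC ((x^T *m x) 0 0) = (map_mx conjC y^T *m y) 0 0.
  rewrite toC_entry map_mxM -map_trmx -/xC -conj_y.
  by rewrite -mulmxA [map_mx _ _ *m (P *m _)]mulmxA PtP mul1mx.
have -> : toC (rho * (x^T *m x) 0 0) = toC rho * toC ((x^T *m x) 0 0) by exact: rmorphM.
rewrite quadA quad1 !mxE mulr_sumr; apply: ler_sum => j _.
rewrite mul_mx_diag !mxE; move: (\sum_k _) => c.
have cc_ge0 : 0 <= c^* * c by rewrite mulrC mul_conjC_ge0.
rewrite -mulrA [d 0 j * c]mulrC mulrA [X in _ <= X]mulrC.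
exact: ler_wpM2l (spectral_diag_le j).
Qed.

End Rayleigh.

Lemma rayleigh_eq_eigenvector (R : rcfType) n (A : 'M[R]_n) rho (x : 'cV[R]_n) :
  A^T = A -> (forall a, eigenvalue A a -> a <= rho) ->
  (x^T *m A *m x) 0 0 = rho * (x^T *m x) 0 0 -> A *m x = rho *: x.
Proof.
move=> symA rho_max eqx; pose B := rho%:M - A.
have formB (y : 'cV[R]_n) :
    (y^T *m B *m y) 0 0 = rho * (y^T *m y) 0 0 - (y^T *m A *m y) 0 0.
  by rewrite /B mulmxBr mulmxBl mul_mx_scalar -scalemxAl !mxE.
have symB : B^T = B by rewrite /B linearB /= tr_scalar_mx symA.
have Bx0 : B *m x = 0.
  apply: (psd_mxform_eq0_ker symB) => [y|]; first by rewrite formB subr_ge0 rayleigh_le.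
  by rewrite formB eqx subrr.
by apply/eqP; rewrite eq_sym -subr_eq0 -mul_scalar_mx -mulmxBl Bx0.
Qed.

Lemma nonneg_eigenvector_pos (R : realDomainType) n (A : 'M[R]_n) rho (w : 'cV[R]_n) :
  (forall i j, 0 <= A i j) -> (forall i j, i != j -> 0 < A i j) ->
  (forall i, 0 <= w i 0) -> w != 0 -> A *m w = rho *: w -> forall i, 0 < w i 0.
Proof.
move=> A_ge0 A_gt0 w_ge0 w_neq0 Aw.
have [k wk_gt0] : exists k, 0 < w k 0.
  apply/existsP; apply: contraR w_neq0; rewrite negb_exists => /forallP wle0.
  apply/eqP/matrixP => i j; rewrite ord1 mxE.
  by apply/eqP; rewrite eq_le w_ge0 andbT leNgt wle0.
move=> i; have [->//|ik] := eqVneq i k.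
have : 0 < rho * w i 0.
  have := congr1 (fun M : 'cV[R]_n => M i 0) Aw; rewrite /= [RHS]mxE => <-.
  rewrite mxE (bigD1 k) //=.
  by rewrite ltr_pwDl ?mulr_gt0 ?A_gt0 // sumr_ge0 // => j _; rewrite mulr_ge0.
by move=> h; rewrite lt0r w_ge0 andbT; apply: contraTneq h => ->; rewrite mulr0 ltxx.
Qed.

Lemma perron_eigenvector (R : rcfType) n (A : 'M[R]_n) rho :
  A^T = A -> (forall i j, 0 <= A i j) -> (forall i j, i != j -> 0 < A i j) ->
  eigenvalue A rho -> (forall a, eigenvalue A a -> a <= rho) ->
  exists x : 'cV[R]_n,
    [/\ forall i, 0 < x i 0, \sum_i x i 0 ^+ 2 = 1 & A *m x = rho *: x].
Proof.
move=> symA A_ge0 A_gt0 /eigenvalueP [v Av v_neq0] rho_max.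
pose w : 'cV[R]_n := \col_i `|v 0 i|.
have w_ge0 i : 0 <= w i 0 by rewrite mxE.
have w_neq0 : w != 0.
  apply: contraNneq v_neq0 => /matrixP w0; apply/eqP/rowP => j.
  by have := w0 j 0; rewrite !mxE => /normr0P/eqP.
have Av_entry i : rho * v 0 i = \sum_j v 0 j * A i j.
  have := congr1 (fun M : 'rV[R]_n => M 0 i) Av; rewrite /= !mxE => <-.
  by apply: eq_bigr => j _; rewrite -[in RHS]symA mxE.
(* the triangle inequality gives the reverse Rayleigh inequality for [|v|] *)
have rayleigh_ge : rho * (w^T *m w) 0 0 <= (w^T *m A *m w) 0 0.
  rewrite mulmx_quadE mulmx_dotE mulr_sumr; apply: ler_sum => i _.
  rewrite !mxE -expr2 real_normK ?num_real // expr2 mulrCA Av_entry mulr_sumr.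
  apply: ler_sum => j _; rewrite !mxE mulrA [X in _ <= X]mulrAC.
  by apply: ler_wpM2r => //; rewrite -normrM ler_norm.
have Aw : A *m w = rho *: w.
  apply: rayleigh_eq_eigenvector => //.
  by apply/eqP; rewrite eq_le rayleigh_ge rayleigh_le.
have w_gt0 := nonneg_eigenvector_pos A_ge0 A_gt0 w_ge0 w_neq0 Aw.
pose s := \sum_i w i 0 ^+ 2.
have s_gt0 : 0 < s.
  rewrite lt0r sumr_ge0 ?andbT => [|i _]; last exact: sqr_ge0.
  apply: contra w_neq0 => /eqP /psumr_eq0P s0; apply/eqP/matrixP => i j.
  by rewrite ord1 [RHS]mxE; apply/eqP; rewrite -sqrf_eq0 s0 // => k _; rewrite sqr_ge0.
exists ((Num.sqrt s)^-1 *: w); split.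
- by move=> i; rewrite mxE mulr_gt0 ?invr_gt0 ?sqrtr_gt0.
- under eq_bigr => i _ do rewrite mxE exprMn exprVn sqr_sqrtr ?ltW //.
  by rewrite -mulr_sumr mulVf // lt0r_neq0.
- by rewrite -scalemxAr Aw scalerA mulrC -scalerA.
Qed.

Lemma psumr_gt0 (R : numDomainType) (I : finType) (i0 : I) (G : I -> R) :
  (forall i, 0 < G i) -> 0 < \sum_i G i.
Proof.
move=> G_gt0; rewrite (bigD1 i0) //= ltr_pwDl // sumr_ge0 // => i _.
exact/ltW.
Qed.

Section DistanceMatrix.
Variables (R : realType) (W : finType) (E : {set {set W}}).

Definition distQ (X : W -> R) : R := \sum_p \sum_q X p * (hdist E p q)%:R * X q.

Lemma sum_enum_rank (G : 'I_#|W| -> R) : \sum_i G i = \sum_(w : W) G (enum_rank w).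
Proof.
by rewrite (reindex (@enum_rank W)) //; exists enum_val => i _;
  [exact: enum_rankK | exact: enum_valK].
Qed.

Lemma dist_mx_quadE (x : 'cV[R]_#|W|) :
  (x^T *m dist_mx R E *m x) 0 0 = distQ (ventry x).
Proof.
rewrite mulmx_quadE sum_enum_rank; apply: eq_bigr => p _.
by rewrite sum_enum_rank; apply: eq_bigr => q _; rewrite mxE !enum_rankK.
Qed.

Lemma dist_mx_eigen_row (x : 'cV[R]_#|W|) rho p : dist_mx R E *m x = rho *: x ->
  \sum_q (hdist E p q)%:R * ventry x q = rho * ventry x p.
Proof.
move=> /(congr1 (fun y : 'cV[R]_#|W| => y (enum_rank p) 0)); rewrite /= !mxE => <-.
by rewrite sum_enum_rank; apply: eq_bigr => q _; rewrite mxE !enum_rankK.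
Qed.

Lemma dist_mx_sym : hconn E -> (dist_mx R E)^T = dist_mx R E.
Proof. by move=> connE; apply/matrixP => i j; rewrite !mxE (hdistC connE). Qed.

Lemma dist_mx_ge0 i j : 0 <= dist_mx R E i j.
Proof. by rewrite mxE ler0n. Qed.

Lemma dist_mx_gt0 : hconn E -> forall i j, i != j -> 0 < dist_mx R E i j.
Proof. by move=> connE i j ij; rewrite mxE ltr0n lt0n hdist_eq0 // (inj_eq enum_val_inj). Qed.

End DistanceMatrix.

Section CoalescenceQuadraticForm.
Variables (R : realType) (T T1 T2 : finType) (r1 : T1) (r2 : T2).
Variables (EH : {set {set T}}) (E1 : {set {set T1}}) (E2 : {set {set T2}}).
Hypotheses (connH : hconn EH) (conn1 : hconn E1) (conn2 : hconn E2).
Variables u1 u2 : T.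

Local Notation V := (@cvert T T1 T2 r1 r2).
Local Notation K a b := (@coal_edges T T1 T2 r1 r2 EH E1 E2 a b).
Local Notation dH := (hdist EH).

Definition branch1_sum (X : V -> R) : R := \sum_y X (inl (inr y)).
Definition branch2_sum (X : V -> R) : R := \sum_y X (inr y).

Local Notation hgap x := ((dH x u2)%:R - (dH x u1)%:R : R).

Definition coal_gain (X : V -> R) : R :=
  \sum_x hgap x * X (inl (inl x)) + (dH u1 u2)%:R * branch1_sum X.

Lemma sum_cvert (G : V -> R) :
  \sum_q G q = \sum_x G (inl (inl x)) + \sum_y G (inl (inr y)) + \sum_y G (inr y).
Proof. by rewrite !big_sumType. Qed.

Local Notation dgap p q := ((hdist (K u1 u2) p q)%:R - (hdist (K u1 u1) p q)%:R : R).

Lemma dgap_rowH (X : V -> R) x :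
  \sum_q dgap (inl (inl x)) q * X q = hgap x * branch2_sum X.
Proof.
rewrite sum_cvert big1 ?add0r => [|x' _]; last by rewrite !coal_hdist_HH // subrr mul0r.
rewrite big1 ?add0r => [|y _]; last by rewrite !coal_hdist_H1 // subrr mul0r.
by rewrite mulr_sumr; apply: eq_bigr => y _; rewrite !coal_hdist_H2 // !natrD; ring.
Qed.

Lemma dgap_row1 (X : V -> R) (y : {x : T1 | x != r1}) :
  \sum_q dgap (inl (inr y)) q * X q = (dH u1 u2)%:R * branch2_sum X.
Proof.
have dKC a b := coal_hdistC (r1 := r1) (r2 := r2) a b connH conn1 conn2.
rewrite sum_cvert big1 ?add0r => [|x _]; last first.
  by rewrite ![hdist _ (inl (inr y)) _]dKC !coal_hdist_H1 // subrr mul0r.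
rewrite big1 ?add0r => [|y' _]; last by rewrite !coal_hdist_11 // subrr mul0r.
rewrite mulr_sumr; apply: eq_bigr => y' _.
by rewrite !coal_hdist_12 // hdistxx // !natrD; ring.
Qed.

Lemma dgap_row2 (X : V -> R) (y : {x : T2 | x != r2}) :
  \sum_q dgap (inr y) q * X q = coal_gain X.
Proof.
have dKC a b := coal_hdistC (r1 := r1) (r2 := r2) a b connH conn1 conn2.
rewrite sum_cvert [X in _ + _ + X]big1 ?addr0 => [|y' _]; last first.
  by rewrite !coal_hdist_22 // subrr mul0r.
congr (_ + _).
  by apply: eq_bigr => x _; rewrite ![hdist _ (inr y) _]dKC !coal_hdist_H2 // !natrD; ring.
rewrite /branch1_sum mulr_sumr; apply: eq_bigr => y' _.
by rewrite ![hdist _ (inr y) _]dKC !coal_hdist_12 // hdistxx // !natrD; ring.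
Qed.

Lemma distQ_coal_gap (X : V -> R) :
  distQ (K u1 u2) X - distQ (K u1 u1) X = 2 * branch2_sum X * coal_gain X.
Proof.
rewrite /distQ -sumrB.
have row_gap p : \sum_q X p * (hdist (K u1 u2) p q)%:R * X q
    - \sum_q X p * (hdist (K u1 u1) p q)%:R * X q = X p * \sum_q dgap p q * X q.
  by rewrite -sumrB mulr_sumr; apply: eq_bigr => q _; ring.
under eq_bigr => p _ do rewrite row_gap.
rewrite sum_cvert.
under eq_bigr => x _ do rewrite dgap_rowH.
under [in X in _ + X + _]eq_bigr => y _ do rewrite dgap_row1.
under [in X in _ + X]eq_bigr => y _ do rewrite dgap_row2.
rewrite -!mulr_suml -/(branch1_sum X) -/(branch2_sum X).
have -> : \sum_x X (inl (inl x)) * (hgap x * branch2_sum X)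
    = (\sum_x hgap x * X (inl (inl x))) * branch2_sum X.
  by rewrite mulr_suml; apply: eq_bigr => x _; ring.
by rewrite /coal_gain; ring.
Qed.

End CoalescenceQuadraticForm.

Section Comparison.
Variables (R : realType) (T T1 T2 : finType) (r1 : T1) (r2 : T2).
Variables (EH : {set {set T}}) (E1 : {set {set T1}}) (E2 : {set {set T2}}).
Hypotheses (connH : hconn EH) (conn1 : hconn E1) (conn2 : hconn E2).
Variables u1 u2 : T.

Local Notation V := (@cvert T T1 T2 r1 r2).
Local Notation K1 := (@coal_edges T T1 T2 r1 r2 EH E1 E2 u1 u1).
Local Notation K2 := (@coal_edges T T1 T2 r1 r2 EH E1 E2 u1 u2).
Local Notation dH := (hdist EH).
Local Notation S1 X := (@branch1_sum R T T1 T2 r1 r2 X).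
Local Notation S2 X := (@branch2_sum R T T1 T2 r1 r2 X).
Local Notation gain X := (@coal_gain R T T1 T2 r1 r2 EH u1 u2 X).

Lemma coal_rho_lt rho1 rho2 (x : 'cV[R]_#|V|) :
  (forall a, eigenvalue (dist_mx R K2) a -> a <= rho2) ->
  \sum_i x i 0 ^+ 2 = 1 -> dist_mx R K1 *m x = rho1 *: x ->
  0 < S2 (ventry x) -> 0 < gain (ventry x) -> rho1 < rho2.
Proof.
move=> rho2_max x_unit Dx S2_gt0 gain_gt0.
have xx : (x^T *m x) 0 0 = 1.
  by rewrite mulmx_dotE -x_unit; apply: eq_bigr => i _; rewrite expr2.
have Q1 : distQ K1 (ventry x) = rho1.
  by rewrite -dist_mx_quadE -mulmxA Dx -scalemxAr mxE xx mulr1.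
have Q2 : distQ K2 (ventry x) <= rho2.
  rewrite -dist_mx_quadE -[rho2]mulr1 -xx rayleigh_le //.
  exact/dist_mx_sym/coal_hconn.
have := distQ_coal_gap connH conn1 conn2 u1 u2 (ventry x).
have : 0 < 2 * S2 (ventry x) * gain (ventry x) by rewrite !mulr_gt0.
lra.
Qed.

Lemma sigma_V'G1 (x : 'cV[R]_#|V|) : sigma x (@V'G1 T T1 T2 r1 r2) = S1 (ventry x).
Proof.
rewrite /sigma /V'G1 big_imset /= => [|? ? _ _ [] //].
by apply: eq_bigl => y; rewrite inE.
Qed.

Lemma sigma_VH (x : 'cV[R]_#|V|) :
  sigma x (@VH T T1 T2 r1 r2) = \sum_v ventry x (inl (inl v)).
Proof.
rewrite /sigma /VH big_imset /= => [|? ? _ _ [] //].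
by apply: eq_bigl => v; rewrite inE.
Qed.

Lemma coal_gain_pos_sigma (x : 'cV[R]_#|V|) : u1 != u2 -> (forall i, 0 < x i 0) ->
  sigma x (@VH T T1 T2 r1 r2) <= sigma x (@V'G1 T T1 T2 r1 r2) + ventry x (embH r1 r2 u1) ->
  0 < gain (ventry x).
Proof.
move=> u12 x_gt0; have xv_gt0 p : 0 < ventry x p := x_gt0 _.
rewrite sigma_V'G1 sigma_VH /embH (bigD1 u1) //= => sigma_le.
rewrite /coal_gain (bigD1 u1) //= hdistxx // subr0.
set d := dH u1 u2; set x1 := ventry x (inl (inl u1)) in sigma_le *.
set rest := \sum_(v | v != u1) ventry x (inl (inl v)) in sigma_le.
have d_ge1 : 1 <= d%:R :> R by rewrite ler1n lt0n hdist_eq0.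
have gap_ge : - d%:R * rest <=
    \sum_(v | v != u1) ((dH v u2)%:R - (dH v u1)%:R) * ventry x (inl (inl v)).
  rewrite /rest mulr_sumr; apply: ler_sum => v _; rewrite ler_pM2r ?xv_gt0 //.
  have : (dH v u1 <= dH v u2 + d)%N by rewrite /d (hdistC connH u1) hdist_triangle.
  by rewrite -(ler_nat R) natrD; lra.
have : 0 < d%:R * x1 by rewrite mulr_gt0 ?xv_gt0 // (lt_le_trans ltr01).
have : 0 <= d%:R * (S1 (ventry x) - rest) by rewrite mulr_ge0 ?subr_ge0; lra.
lra.
Qed.

Lemma coal_branch1_eigen_ge (x : 'cV[R]_#|V|) rho1 (y : {x : T1 | x != r1}) :
  (forall i, 0 < x i 0) -> dist_mx R K1 *m x = rho1 *: x ->
  2 * S2 (ventry x) <= rho1 * ventry x (inl (inr y)).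
Proof.
move=> x_gt0 Dx; have xv_ge0 p : 0 <= ventry x p := ltW (x_gt0 _).
rewrite -(dist_mx_eigen_row _ Dx) sum_cvert -addrA.
apply: ler_wpDl; first by apply: sumr_ge0 => p _; rewrite mulr_ge0.
apply: ler_wpDl; first by apply: sumr_ge0 => p _; rewrite mulr_ge0.
rewrite mulr_sumr; apply: ler_sum => y' _; apply: ler_wpM2r => //.
have y_gt0 : (0 < hdist E1 r1 (val y))%N by rewrite lt0n hdist_eq0 // eq_sym (valP y).
have y'_gt0 : (0 < hdist E2 r2 (val y'))%N by rewrite lt0n hdist_eq0 // eq_sym (valP y').
by rewrite coal_hdist_12 // hdistxx // addn0 ler_nat; exact: leq_add y_gt0 y'_gt0.
Qed.

Section PendantTwins.
Hypotheses (deg1 : hdeg EH u1 = 1%N) (deg2 : hdeg EH u2 = 1%N) (d12 : dH u1 u2 = 1%N).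

Lemma sum_hgap_twins (h : T -> R) :
  \sum_v ((dH v u2)%:R - (dH v u1)%:R) * h v = h u1 - h u2.
Proof.
have u12 : u1 != u2 by rewrite -(hdist_eq0 connH) d12.
rewrite (bigD1 u1) //= (bigD1 u2) 1?eq_sym //= big1 ?addr0 => [|v /andP [vu1 vu2]].
  by rewrite d12 hdistC // d12 !hdistxx //; ring.
by rewrite (pendant_twins_hdist connH deg1 deg2 d12 vu1 vu2) subrr mul0r.
Qed.

Lemma coal_gain_twins (X : V -> R) : gain X = X (inl (inl u1)) - X (inl (inl u2)) + S1 X.
Proof. by rewrite /coal_gain sum_hgap_twins d12 mul1r. Qed.

Lemma coal_row_H (X : V -> R) u :
  \sum_q (hdist K1 (inl (inl u)) q)%:R * X q =
    \sum_v (dH u v)%:R * X (inl (inl v)) +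
    \sum_y (dH u u1 + hdist E1 r1 (val y))%:R * X (inl (inr y)) +
    \sum_y (dH u u1 + hdist E2 r2 (val y))%:R * X (inr y).
Proof.
rewrite sum_cvert; congr (_ + _ + _); apply: eq_bigr => q _.
- by rewrite coal_hdist_HH.
- by rewrite coal_hdist_H1.
- by rewrite coal_hdist_H2.
Qed.

Lemma coal_twins_eigen (x : 'cV[R]_#|V|) rho1 : dist_mx R K1 *m x = rho1 *: x ->
  (rho1 + 1) * (ventry x (inl (inl u1)) - ventry x (inl (inl u2)))
    = - (S1 (ventry x) + S2 (ventry x)).
Proof.
move=> Dx; have := coal_row_H (ventry x) u1; have := coal_row_H (ventry x) u2.
rewrite !(dist_mx_eigen_row _ Dx) (hdistC connH u2 u1) d12 hdistxx //.
have sumH : \sum_v (dH u1 v)%:R * ventry x (inl (inl v))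
    - \sum_v (dH u2 v)%:R * ventry x (inl (inl v))
    = ventry x (inl (inl u2)) - ventry x (inl (inl u1)).
  rewrite -sumrB -[RHS]opprB -(sum_hgap_twins (fun v => ventry x (inl (inl v)))).
  rewrite -sumrN; apply: eq_bigr => v _.
  by rewrite !(hdistC connH v); ring.
have shift (I : finType) (f : I -> nat) (G : I -> R) :
    \sum_i (1 + f i)%:R * G i = \sum_i G i + \sum_i (0 + f i)%:R * G i.
  by rewrite -big_split; apply: eq_bigr => i _ /=; rewrite natrD; ring.
rewrite !shift -/(S1 (ventry x)) -/(S2 (ventry x)); lra.
Qed.

Lemma coal_gain_pos_twins (x : 'cV[R]_#|V|) rho1 (y1 : {x : T1 | x != r1})
    (y2 : {x : T2 | x != r2}) :
  (forall i, 0 < x i 0) -> dist_mx R K1 *m x = rho1 *: x -> 0 < gain (ventry x).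
Proof.
move=> x_gt0 Dx; have xv_gt0 p : 0 < ventry x p := x_gt0 _.
have S2_gt0 : 0 < S2 (ventry x) by apply: (psumr_gt0 y2).
have rho_y1 := coal_branch1_eigen_ge y1 x_gt0 Dx.
have rho1_gt0 : 0 < rho1.
  by rewrite -(pmulr_lgt0 _ (xv_gt0 (inl (inr y1)))) (lt_le_trans _ rho_y1) ?mulr_gt0.
have rho_S1 : rho1 * ventry x (inl (inr y1)) <= rho1 * S1 (ventry x).
  rewrite ler_pM2l // /branch1_sum (bigD1 y1) //= ler_wpDr // sumr_ge0 // => y _.
  exact: ltW.
have := coal_twins_eigen Dx; rewrite coal_gain_twins => twins_eigen.
have rho1S_gt0 : 0 < rho1 + 1 by lra.
rewrite -(pmulr_rgt0 _ rho1S_gt0) mulrDr twins_eigen; lra.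
Qed.

End PendantTwins.

End Comparison.

Theorem lemma4 (R : realType) (T T1 T2 : finType)
  (EH : {set {set T}}) (E1 : {set {set T1}}) (E2 : {set {set T2}})
  (r1 : T1) (r2 : T2) (u1 u2 : T) :
  hypergraph EH -> hconnected EH ->
  hypergraph E1 -> hconnected E1 -> E1 != set0 ->
  hypergraph E2 -> hconnected E2 -> E2 != set0 ->
  u1 != u2 ->
  forall rho1 rho2 : R,
  largest_eigenvalue (dist_mx R (@coal_edges T T1 T2 r1 r2 EH E1 E2 u1 u1)) rho1 ->
  largest_eigenvalue (dist_mx R (@coal_edges T T1 T2 r1 r2 EH E1 E2 u1 u2)) rho2 ->
  ((hdeg EH u1 = 1%N /\ hdeg EH u2 = 1%N /\ hdist EH u1 u2 = 1%N) \/
   (exists x : 'cV[R]_#|@cvert T T1 T2 r1 r2|,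
      perron_vector (dist_mx R (@coal_edges T T1 T2 r1 r2 EH E1 E2 u1 u1)) x /\
      sigma x (@V'G1 T T1 T2 r1 r2) + ventry x (@embH T T1 T2 r1 r2 u1)
        >= sigma x (@VH T T1 T2 r1 r2))) ->
  rho1 < rho2.
Proof.
move=> _ /hconnected_hconn connH hyp1 /hconnected_hconn conn1 E1_neq0.
move=> hyp2 /hconnected_hconn conn2 E2_neq0 u12 rho1 rho2 [eig1 rho1_max] [_ rho2_max].
have [y1 y1_neq] := hypergraph_exists_neq r1 hyp1 E1_neq0.
have [y2 y2_neq] := hypergraph_exists_neq r2 hyp2 E2_neq0.
have connK1 := coal_hconn (r1 := r1) (r2 := r2) u1 u1 connH conn1 conn2.
have S2_gt0 (x : 'cV[R]_#|@cvert T T1 T2 r1 r2|) :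
  (forall i, 0 < x i 0) -> 0 < branch2_sum (ventry x).
  by move=> x_gt0; apply: (psumr_gt0 (exist _ y2 y2_neq)) => y; exact: x_gt0.
case=> [[deg1 [deg2 d12]] | [x [[rho [[eig rho_max] x_gt0 x_unit Dx]] sigma_le]]].
  have [x [x_gt0 x_unit Dx]] := perron_eigenvector (dist_mx_sym R connK1)
    (dist_mx_ge0 R _) (dist_mx_gt0 R connK1) eig1 rho1_max.
  apply: (coal_rho_lt connH conn1 conn2 rho2_max x_unit Dx (S2_gt0 x x_gt0)).
  exact: (coal_gain_pos_twins connH conn1 conn2 deg1 deg2 d12 (exist _ y1 y1_neq)
    (exist _ y2 y2_neq) x_gt0 Dx).
have <- : rho = rho1 by apply/eqP; rewrite eq_le rho_max ?rho1_max.
apply: (coal_rho_lt connH conn1 conn2 rho2_max x_unit Dx (S2_gt0 x x_gt0)).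
exact: coal_gain_pos_sigma.
Qed.
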